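(* Let $\mathbb{E}$ be a finitely complete category, $\Sigma$ a point-congruous class of split epimorphisms, and suppose $\mathbb{E}$ is a $\Sigma$-Mal'tsev category. Let $f\colon X\to Y$ and $g\colon Y\to Z$ be morphisms. If $g\circ f$ and $g$ are $\Sigma$-special, then $f$ is $\Sigma$-special.
   Context: A split epimorphism is a pair $(f,s)$ with $fs=1$. A class $\Sigma$ of split epimorphisms is fibrational if it contains all split epimorphisms $(f,s)$ with $f$ invertible and is stable under pullback along any morphism; it is point-congruous if moreover the full subcategory $\Sigma(\mathbb{E})$ of the category $\mathrm{Pt}(\mathbb{E})$ of split epimorphisms (with commuting squares as morphisms) is closed under finite limits in $\mathrm{Pt}(\mathbb{E})$. A pair of morphisms with common codomain $W$ is jointly extremally epic if it factors jointly through no non-invertible monomorphism into $W$. $\mathbb{E}$ is $\Sigma$-Mal'tsev if for every split epimorphism $(f,s)\colon X\rightleftarrows Y$ in $\Sigma$ and every split epimorphism $(g,t)$ with $g\colon Y'\to Y$, letting $X'=Y'\times_YX$, $s'=(1_{Y'},sg)$, $\bar t=(tf,1_X)$, the pair $(s',\bar t)$ is jointly extremally epic. A $\Sigma$-relation is a reflexive relation $(d_0,d_1)\colon S\rightarrowtail X\times X$ with reflexivity $s_0$ such that $(d_0,s_0)\in\Sigma$. A morphism $f$ is $\Sigma$-special when its kernel relation $R[f]$ is a $\Sigma$-relation. *)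

Set Implicit Arguments.
Unset Strict Implicit.

Record Category := {
  Ob :> Type;
  Hom : Ob -> Ob -> Type;
  idm : forall A, Hom A A;
  comp : forall A B C, Hom B C -> Hom A B -> Hom A C;
  comp_assoc : forall A B C D (h : Hom C D) (g : Hom B C) (f : Hom A B),
      comp h (comp g f) = comp (comp h g) f;
  comp_idl : forall A B (f : Hom A B), comp (idm B) f = f;
  comp_idr : forall A B (f : Hom A B), comp f (idm A) = f
}.

Arguments Hom {c} _ _.
Arguments idm {c} A.
Arguments comp {c A B C} _ _.

Notation "g ∘ f" := (comp g f) (at level 40, left associativity).

Section Notions.
Variable E : Category.

Definition is_mono {A B : E} (m : Hom A B) : Prop :=
  forall W (u v : Hom W A), m ∘ u = m ∘ v -> u = v.

Definition is_iso {A B : E} (f : Hom A B) : Prop :=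
  exists g : Hom B A, g ∘ f = idm A /\ f ∘ g = idm B.

Definition is_terminal (T : E) : Prop :=
  (forall A : E, exists _ : Hom A T, True) /\
  (forall (A : E) (u v : Hom A T), u = v).

Definition is_pullback {X Y Z P : E} (f : Hom X Z) (g : Hom Y Z)
  (p1 : Hom P X) (p2 : Hom P Y) : Prop :=
  f ∘ p1 = g ∘ p2 /\
  forall W (u : Hom W X) (v : Hom W Y), f ∘ u = g ∘ v ->
    exists w : Hom W P, (p1 ∘ w = u /\ p2 ∘ w = v) /\
      forall w' : Hom W P, p1 ∘ w' = u -> p2 ∘ w' = v -> w' = w.

Definition finitely_complete : Prop :=
  (exists T : E, is_terminal T) /\
  forall (X Y Z : E) (f : Hom X Z) (g : Hom Y Z),
    exists (P : E) (p1 : Hom P X) (p2 : Hom P Y), is_pullback f g p1 p2.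

Definition split_epi_class : Type :=
  forall X Y : E, Hom X Y -> Hom Y X -> Prop.

Definition fibrational (Sigma : split_epi_class) : Prop :=
  (forall X Y (f : Hom X Y) (s : Hom Y X), Sigma X Y f s -> f ∘ s = idm Y) /\
  (forall X Y (f : Hom X Y) (s : Hom Y X),
      f ∘ s = idm Y -> is_iso f -> Sigma X Y f s) /\
  (forall X Y (f : Hom X Y) (s : Hom Y X) Y' (h : Hom Y' Y)
          P (p1 : Hom P Y') (p2 : Hom P X) (s' : Hom Y' P),
      Sigma X Y f s -> is_pullback h f p1 p2 ->
      p1 ∘ s' = idm Y' -> p2 ∘ s' = s ∘ h -> Sigma P Y' p1 s').

(** The category Pt(E): objects are split epis (f,s) : X <=> Y with f s = 1,
    morphisms (f,s) -> (f',s') are pairs (a : X -> X', b : Y -> Y') with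
    f' a = b f and a s = s' b. *)
Definition pt_mor {X Y X' Y' : E} (f : Hom X Y) (s : Hom Y X)
  (f' : Hom X' Y') (s' : Hom Y' X') (a : Hom X X') (b : Hom Y Y') : Prop :=
  f' ∘ a = b ∘ f /\ a ∘ s = s' ∘ b.

Definition is_point {X Y : E} (f : Hom X Y) (s : Hom Y X) : Prop :=
  f ∘ s = idm Y.

Definition is_pt_terminal {X Y : E} (f : Hom X Y) (s : Hom Y X) : Prop :=
  is_point f s /\
  forall X' Y' (f' : Hom X' Y') (s' : Hom Y' X'), is_point f' s' ->
    (exists a b, pt_mor f' s' f s a b) /\
    (forall a b a' b', pt_mor f' s' f s a b -> pt_mor f' s' f s a' b' ->
        a = a' /\ b = b').

(** Pullback in Pt(E) of the cospan (a1,a2) : A -> C <- B : (b1,b2),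
    with cone (p1,q1) : P -> A, (p2,q2) : P -> B. *)
Definition is_pt_pullback
  {XA YA XB YB XC YC XP YP : E}
  (fA : Hom XA YA) (sA : Hom YA XA) (fB : Hom XB YB) (sB : Hom YB XB)
  (fC : Hom XC YC) (sC : Hom YC XC) (fP : Hom XP YP) (sP : Hom YP XP)
  (a1 : Hom XA XC) (a2 : Hom YA YC) (b1 : Hom XB XC) (b2 : Hom YB YC)
  (p1 : Hom XP XA) (q1 : Hom YP YA) (p2 : Hom XP XB) (q2 : Hom YP YB) : Prop :=
  is_point fP sP /\
  pt_mor fP sP fA sA p1 q1 /\ pt_mor fP sP fB sB p2 q2 /\
  a1 ∘ p1 = b1 ∘ p2 /\ a2 ∘ q1 = b2 ∘ q2 /\
  forall XW YW (fW : Hom XW YW) (sW : Hom YW XW)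
         (u1 : Hom XW XA) (v1 : Hom YW YA) (u2 : Hom XW XB) (v2 : Hom YW YB),
    is_point fW sW -> pt_mor fW sW fA sA u1 v1 -> pt_mor fW sW fB sB u2 v2 ->
    a1 ∘ u1 = b1 ∘ u2 -> a2 ∘ v1 = b2 ∘ v2 ->
    exists (w1 : Hom XW XP) (w2 : Hom YW YP),
      (pt_mor fW sW fP sP w1 w2 /\
       p1 ∘ w1 = u1 /\ q1 ∘ w2 = v1 /\ p2 ∘ w1 = u2 /\ q2 ∘ w2 = v2) /\
      forall (w1' : Hom XW XP) (w2' : Hom YW YP),
        pt_mor fW sW fP sP w1' w2' ->
        p1 ∘ w1' = u1 -> q1 ∘ w2' = v1 -> p2 ∘ w1' = u2 -> q2 ∘ w2' = v2 ->
        w1' = w1 /\ w2' = w2.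

(** Point-congruous: fibrational, and the full subcategory Sigma(E) of Pt(E)
    is closed under finite limits in Pt(E), i.e. under the terminal object
    and pullbacks (which generate all finite limits). *)
Definition point_congruous (Sigma : split_epi_class) : Prop :=
  fibrational Sigma /\
  (forall X Y (f : Hom X Y) (s : Hom Y X), is_pt_terminal f s -> Sigma X Y f s) /\
  (forall XA YA XB YB XC YC XP YP
     (fA : Hom XA YA) (sA : Hom YA XA) (fB : Hom XB YB) (sB : Hom YB XB)
     (fC : Hom XC YC) (sC : Hom YC XC) (fP : Hom XP YP) (sP : Hom YP XP)
     (a1 : Hom XA XC) (a2 : Hom YA YC) (b1 : Hom XB XC) (b2 : Hom YB YC)
     (p1 : Hom XP XA) (q1 : Hom YP YA) (p2 : Hom XP XB) (q2 : Hom YP YB),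
     Sigma XA YA fA sA -> Sigma XB YB fB sB -> Sigma XC YC fC sC ->
     pt_mor fA sA fC sC a1 a2 -> pt_mor fB sB fC sC b1 b2 ->
     is_pt_pullback fA sA fB sB fC sC fP sP a1 a2 b1 b2 p1 q1 p2 q2 ->
     Sigma XP YP fP sP).

Definition jointly_extremally_epic {A B W : E} (u : Hom A W) (v : Hom B W)
  : Prop :=
  forall M (m : Hom M W), is_mono m ->
    (exists u' : Hom A M, m ∘ u' = u) ->
    (exists v' : Hom B M, m ∘ v' = v) ->
    is_iso m.

(** E is Sigma-Mal'tsev. Here X' = Y' x_Y X with projections
    p1 : X' -> Y', p2 : X' -> X; s' = (1, s g) and tbar = (t f, 1). *)
Definition sigma_maltsev (Sigma : split_epi_class) : Prop :=
  forall X Y (f : Hom X Y) (s : Hom Y X) Y' (g : Hom Y' Y) (t : Hom Y Y')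
         X' (p1 : Hom X' Y') (p2 : Hom X' X) (s' : Hom Y' X') (tb : Hom X X'),
    Sigma X Y f s -> g ∘ t = idm Y -> is_pullback g f p1 p2 ->
    p1 ∘ s' = idm Y' -> p2 ∘ s' = s ∘ g ->
    p1 ∘ tb = t ∘ f -> p2 ∘ tb = idm X ->
    jointly_extremally_epic s' tb.

Definition jointly_monic {S X : E} (d0 d1 : Hom S X) : Prop :=
  forall W (u v : Hom W S), d0 ∘ u = d0 ∘ v -> d1 ∘ u = d1 ∘ v -> u = v.

Definition sigma_relation (Sigma : split_epi_class) {S X : E}
  (d0 d1 : Hom S X) (s0 : Hom X S) : Prop :=
  jointly_monic d0 d1 /\ d0 ∘ s0 = idm X /\ d1 ∘ s0 = idm X /\
  Sigma S X d0 s0.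

(** Since the kernel pair
    is only defined up to isomorphism, we quantify over all kernel pairs. *)
Definition sigma_special (Sigma : split_epi_class) {X Y : E} (f : Hom X Y)
  : Prop :=
  forall R (d0 d1 : Hom R X) (s0 : Hom X R),
    is_pullback f f d0 d1 -> d0 ∘ s0 = idm X -> d1 ∘ s0 = idm X ->
    sigma_relation Sigma d0 d1 s0.

End Notions.


Set Implicit Arguments.

(* The kernel relation R[f] is the pullback in Pt(E) of the kernel relation
   R[g f], viewed as the point (d0, s0) over X, along the morphism of points
   from the discrete point (1_Y, 1_Y) into R[g] given by the diagonal of R[g];
   the comparison R[g f] -> R[g] is f x f over f.  Since Sigma(E) is closed
   under pullbacks in Pt(E) and contains the isomorphic point (1_Y, 1_Y),
   R[f] is a Sigma-relation. *)

Lemma pullback_factor (E : Category) (X Y Z P W : E) (f : Hom X Z) (g : Hom Y Z)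
  (p1 : Hom P X) (p2 : Hom P Y) (u : Hom W X) (v : Hom W Y) :
  is_pullback f g p1 p2 -> f ∘ u = g ∘ v ->
  exists w : Hom W P, p1 ∘ w = u /\ p2 ∘ w = v.
Proof.
  intros [_ Huniv] Huv. destruct (Huniv W u v Huv) as [w [Hw _]]. eauto.
Qed.
Arguments pullback_factor {E X Y Z P W f g p1 p2} u v.

Section Pullbacks.
Variable E : Category.

Lemma pullback_jointly_monic (X Z P : E) (f g : Hom X Z) (p1 p2 : Hom P X) :
  is_pullback f g p1 p2 -> jointly_monic p1 p2.
Proof.
  intros [Hsq Huniv] W u v H1 H2.
  destruct (Huniv W (p1 ∘ u) (p2 ∘ u)) as [w [_ Hw]].
  { rewrite !comp_assoc, Hsq. reflexivity. }
  rewrite (Hw u eq_refl eq_refl). symmetry. apply Hw; auto.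
Qed.

Lemma kernel_pair_with_diagonal (X Y : E) (h : Hom X Y) :
  (exists (K : E) (k0 k1 : Hom K X), is_pullback h h k0 k1) ->
  exists (K : E) (k0 k1 : Hom K X) (t : Hom X K),
    is_pullback h h k0 k1 /\ k0 ∘ t = idm X /\ k1 ∘ t = idm X.
Proof.
  intros [K [k0 [k1 HK]]].
  destruct (pullback_factor (idm X) (idm X) HK eq_refl) as [t [Ht0 Ht1]].
  exists K, k0, k1, t. auto.
Qed.

Lemma identity_point_in_class (Sigma : split_epi_class E) (Y : E) :
  fibrational Sigma -> Sigma Y Y (idm Y) (idm Y).
Proof.
  intros [_ [Hiso _]]. apply Hiso; [apply comp_idl|].
  exists (idm Y). split; apply comp_idl.
Qed.

Lemma special_kernel_point (Sigma : split_epi_class E) (X Y R : E)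
  (h : Hom X Y) (k0 k1 : Hom R X) (t : Hom X R) :
  sigma_special Sigma h -> is_pullback h h k0 k1 ->
  k0 ∘ t = idm X -> k1 ∘ t = idm X -> Sigma R X k0 t.
Proof. intros Hh HK Ht0 Ht1. apply (Hh R k0 k1 t HK Ht0 Ht1). Qed.

End Pullbacks.

Section KernelRelationAsPullback.
Variable E : Category.
Variables (X Y Z : E) (f : Hom X Y) (g : Hom Y Z).
Variables (R K L : E) (d0 d1 : Hom R X) (s0 : Hom X R)
  (k0 k1 : Hom K X) (t : Hom X K) (l0 l1 : Hom L Y) (u : Hom Y L)
  (a : Hom K L) (p : Hom R K).
Hypothesis HR : is_pullback f f d0 d1.
Hypotheses (Hs0 : d0 ∘ s0 = idm X) (Hs1 : d1 ∘ s0 = idm X).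
Hypothesis HK : is_pullback (g ∘ f) (g ∘ f) k0 k1.
Hypotheses (Ht0 : k0 ∘ t = idm X) (Ht1 : k1 ∘ t = idm X).
Hypothesis HL : is_pullback g g l0 l1.
Hypotheses (Hu0 : l0 ∘ u = idm Y) (Hu1 : l1 ∘ u = idm Y).
Hypotheses (Ha0 : l0 ∘ a = f ∘ k0) (Ha1 : l1 ∘ a = f ∘ k1).
Hypotheses (Hp0 : k0 ∘ p = d0) (Hp1 : k1 ∘ p = d1).

Let JR := pullback_jointly_monic HR.
Let JK := pullback_jointly_monic HK.
Let JL := pullback_jointly_monic HL.

Lemma kernel_map_pt_mor : pt_mor k0 t l0 u a f.
Proof.
  split; [exact Ha0|].
  apply JL; rewrite !comp_assoc.
  - rewrite Ha0, Hu0, <- comp_assoc, Ht0, comp_idl, comp_idr. reflexivity.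
  - rewrite Ha1, Hu1, <- comp_assoc, Ht1, comp_idl, comp_idr. reflexivity.
Qed.

Lemma diagonal_pt_mor : pt_mor (idm Y) (idm Y) l0 u u (idm Y).
Proof. split; [rewrite comp_idl; exact Hu0 | reflexivity]. Qed.

Lemma inclusion_pt_mor : pt_mor d0 s0 k0 t p (idm X).
Proof.
  split; [rewrite comp_idl; exact Hp0|].
  rewrite comp_idr. apply JK; rewrite comp_assoc.
  - rewrite Hp0, Hs0, Ht0. reflexivity.
  - rewrite Hp1, Hs1, Ht1. reflexivity.
Qed.

Lemma projection_pt_mor : pt_mor d0 s0 (idm Y) (idm Y) (f ∘ d0) f.
Proof.
  split; [apply comp_idl|].
  rewrite <- comp_assoc, Hs0, comp_idl. apply comp_idr.
Qed.

Lemma kernel_square_commutes : a ∘ p = u ∘ (f ∘ d0).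
Proof.
  pose proof (proj1 HR) as Hsq.
  apply JL; rewrite !comp_assoc.
  - rewrite Ha0, Hu0, comp_idl, <- comp_assoc, Hp0. reflexivity.
  - rewrite Ha1, Hu1, comp_idl, <- comp_assoc, Hp1. symmetry. exact Hsq.
Qed.

Lemma kernel_relation_pt_pullback :
  is_pt_pullback k0 t (idm Y) (idm Y) l0 u d0 s0
    a f u (idm Y) p (idm X) (f ∘ d0) f.
Proof.
  split; [exact Hs0|].
  split; [exact inclusion_pt_mor|].
  split; [exact projection_pt_mor|].
  split; [exact kernel_square_commutes|].
  split; [rewrite comp_idl, comp_idr; reflexivity|].
  intros XW YW fW sW u1 v1 u2 v2 _ [Hm1 Hm2] _ Hc1 Hc2.
  rewrite comp_idl in Hc2.
  assert (Hu20 : f ∘ k0 ∘ u1 = u2).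
  { rewrite <- Ha0, <- comp_assoc, Hc1, comp_assoc, Hu0. apply comp_idl. }
  assert (Hu21 : f ∘ k1 ∘ u1 = u2).
  { rewrite <- Ha1, <- comp_assoc, Hc1, comp_assoc, Hu1. apply comp_idl. }
  destruct (pullback_factor (k0 ∘ u1) (k1 ∘ u1) HR) as [w [Hw0 Hw1]].
  { rewrite !comp_assoc, Hu20, Hu21. reflexivity. }
  exists w, v1. split.
  - split; [split; [rewrite Hw0; exact Hm1|]|].
    { apply JR; rewrite !comp_assoc.
      - rewrite Hw0, Hs0, <- comp_assoc, Hm2, comp_assoc, Ht0. reflexivity.
      - rewrite Hw1, Hs1, <- comp_assoc, Hm2, comp_assoc, Ht1. reflexivity. }
    split; [apply JK; rewrite comp_assoc; [rewrite Hp0 | rewrite Hp1]; assumption|].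
    split; [apply comp_idl|].
    split; [rewrite <- comp_assoc, Hw0, comp_assoc; exact Hu20|].
    exact Hc2.
  - intros w1 w2 _ Hq1 Hq2 _ _. split.
    + apply JR; rewrite ?Hw0, ?Hw1, <- Hq1, comp_assoc;
        [rewrite Hp0 | rewrite Hp1]; reflexivity.
    + rewrite comp_idl in Hq2. exact Hq2.
Qed.

End KernelRelationAsPullback.

Theorem proposition6p4 (E : Category) (Sigma : split_epi_class E) :
  finitely_complete E -> point_congruous Sigma -> sigma_maltsev Sigma ->
  forall (X Y Z : E) (f : Hom X Y) (g : Hom Y Z),
    sigma_special Sigma (g ∘ f) -> sigma_special Sigma g ->
    sigma_special Sigma f.
Proof.
  intros [_ Hpb] [Hfib [_ Hclosed]] _ X Y Z f g Hgf Hg R d0 d1 s0 HR Hs0 Hs1.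
  destruct (kernel_pair_with_diagonal (Hpb _ _ _ (g ∘ f) (g ∘ f)))
    as [K [k0 [k1 [t [HK [Ht0 Ht1]]]]]].
  destruct (kernel_pair_with_diagonal (Hpb _ _ _ g g))
    as [L [l0 [l1 [u [HL [Hu0 Hu1]]]]]].
  destruct (pullback_factor (f ∘ k0) (f ∘ k1) HL) as [a [Ha0 Ha1]].
  { rewrite !comp_assoc. apply HK. }
  destruct (pullback_factor d0 d1 HK) as [p [Hp0 Hp1]].
  { rewrite <- !comp_assoc. f_equal. apply HR. }
  split; [exact (pullback_jointly_monic HR)|].
  split; [exact Hs0|]. split; [exact Hs1|].
  apply (Hclosed _ _ _ _ _ _ _ _ k0 t (idm Y) (idm Y) l0 u d0 s0
           a f u (idm Y) p (idm X) (f ∘ d0) f).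
  - exact (special_kernel_point t Hgf HK Ht0 Ht1).
  - exact (identity_point_in_class Y Hfib).
  - exact (special_kernel_point u Hg HL Hu0 Hu1).
  - eapply kernel_map_pt_mor; eassumption.
  - apply diagonal_pt_mor, Hu0.
  - eapply kernel_relation_pt_pullback; eassumption.
Qed.
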